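(* Let $\mathcal{DP}^*_1$ be the digraph with vertex set $\{1,2\}$ and edge set $\{(1,1),(1,2),(2,2)\}$. Then $\Pi_2\text{-}\mathrm{CSP}((\mathcal{DP}^*_1)^\omega) \subseteq \Pi_2\text{-}\mathrm{CSP}(\mathbb{N};\leq)$, where the edge relation and $\leq$ interpret the same binary relation symbol.
   Context: $(\mathcal{DP}^*_1)^\omega$ is the direct power of countably many copies of $\mathcal{DP}^*_1$ (edges holding coordinatewise). $\Pi_2\text{-}\mathrm{CSP}(\mathcal{A})$ is the set of sentences of the form $\forall\bar x\exists\bar y\,P$, with $P$ a conjunction of atoms (relational atoms and equalities), true in $\mathcal{A}$. *)

From mathcomp Require Import all_boot.
Set Implicit Arguments. Unset Strict Implicit. Unset Printing Implicit Defensive.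

Record digraph := Digraph { carrier : Type; edge : carrier -> carrier -> Prop }.
Arguments Digraph {carrier} edge.

Inductive atom (k : nat) :=
| AEdge of 'I_k & 'I_k
| AEq of 'I_k & 'I_k.

(* A Pi_2 sentence  forall x_1..x_n exists y_1..y_m, P  where P is a finite
   conjunction (list) of atoms over the n+m variables; variable v : 'I_(n+m)
   is x_v if v < n and y_(v-n) otherwise. *)
Record pi2_sentence := Pi2 {
  nU : nat;
  nE : nat;
  matrix : seq (atom (nU + nE))
}.

Definition atom_holds (A : digraph) k (val : 'I_k -> carrier A) (a : atom k) : Prop :=
  match a with
  | AEdge u v => @edge A (val u) (val v)
  | AEq u v => val u = val v
  end.

Definition join_val (T : Type) n m (xs : 'I_n -> T) (ys : 'I_m -> T)
  (v : 'I_(n + m)) : T :=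
  match split v with inl i => xs i | inr j => ys j end.

Definition holds (A : digraph) (phi : pi2_sentence) : Prop :=
  forall xs : 'I_(nU phi) -> carrier A,
  exists ys : 'I_(nE phi) -> carrier A,
  foldr (fun a P => @atom_holds A _ (join_val xs ys) a /\ P) True (matrix phi).

Definition Pi2CSP (A : digraph) : pi2_sentence -> Prop := fun phi => holds A phi.

(* DP*_1 : vertex set {1,2} coded as bool (false = 1, true = 2),
   edges (1,1),(1,2),(2,2): all pairs except (2,1). *)
Definition DP1_edge (a b : bool) : Prop := ~ (a = true /\ b = false).
Definition DP1 : digraph := Digraph DP1_edge.

Definition DP1_omega : digraph :=
  Digraph (fun f g : nat -> bool => forall i, DP1_edge (f i) (g i)).

Definition Nle : digraph := Digraph (fun a b : nat => a <= b).

(* A Pi_2 sentence true in A is true in every B that is a "local homomorphic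
   retract" of A: for each finite tuple of B there are maps e : B -> A and a
   homomorphism h : A -> B with h (e x) = x on the tuple.  Given a witness for
   the tuple e(xs) in A, its image under h witnesses the sentence in B.
   For (N; <=) inside (DP*_1)^omega take e n = the indicator of [0, n) and
   h f = the number of coordinates below M equal to 2, where M bounds the
   tuple: h is monotone coordinatewise and h (e n) = min M n = n. *)
From mathcomp Require Import all_boot.

Set Implicit Arguments. Unset Strict Implicit. Unset Printing Implicit Defensive.

Definition digraph_hom (A B : digraph) (h : carrier A -> carrier B) : Prop :=
  forall x y, edge x y -> edge (h x) (h y).

Section Homomorphism.

Variables (A B : digraph) (h : carrier A -> carrier B).
Hypothesis hom_h : digraph_hom h.

Lemma atom_holds_hom k (val : 'I_k -> carrier A) (a : atom k) :
  atom_holds val a -> atom_holds (h \o val) a.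
Proof. by case: a => u v /=; [apply: hom_h | move=> ->]. Qed.

Lemma conj_atoms_hom k (val : 'I_k -> carrier A) (l : seq (atom k)) :
  foldr (fun a P => atom_holds val a /\ P) True l ->
  foldr (fun a P => atom_holds (h \o val) a /\ P) True l.
Proof.
elim: l => [|a l IHl] //= [Ha Hl].
by split; [apply: atom_holds_hom | apply: IHl].
Qed.

End Homomorphism.

Lemma join_val_comp (S T : Type) (f : S -> T) n m (xs : 'I_n -> S) (ys : 'I_m -> S) :
  f \o join_val xs ys =1 join_val (f \o xs) (f \o ys).
Proof. by move=> v; rewrite /join_val /=; case: (split v). Qed.

Lemma atom_holds_ext (A : digraph) k (val val' : 'I_k -> carrier A) (a : atom k) :
  val =1 val' -> atom_holds val a -> atom_holds val' a.
Proof. by move=> eq_val; case: a => u v /=; rewrite !eq_val. Qed.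

Lemma conj_atoms_ext (A : digraph) k (val val' : 'I_k -> carrier A) (l : seq (atom k)) :
  val =1 val' ->
  foldr (fun a P => atom_holds val a /\ P) True l ->
  foldr (fun a P => atom_holds val' a /\ P) True l.
Proof.
move=> eq_val; elim: l => [|a l IHl] //= [Ha Hl].
by split; [apply: atom_holds_ext Ha | apply: IHl].
Qed.

Lemma Pi2CSP_sub_local_retract (A B : digraph) :
  (forall n (xs : 'I_n -> carrier B),
     exists (e : carrier B -> carrier A) (h : carrier A -> carrier B),
       digraph_hom h /\ forall i, h (e (xs i)) = xs i) ->
  forall phi, Pi2CSP A phi -> Pi2CSP B phi.
Proof.
move=> retract phi holdsA xs.
have [e [h [hom_h he]]] := retract _ xs.
have [ys Hys] := holdsA (e \o xs).
exists (h \o ys); apply: conj_atoms_ext (conj_atoms_hom hom_h Hys).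
by move=> v; rewrite join_val_comp /join_val; case: (split v) => //= i; rewrite he.
Qed.

Definition prefix_weight (M : nat) (f : nat -> bool) : nat := \sum_(i < M) f i.

Definition initial_segment (n : nat) : nat -> bool := fun i => i < n.

Lemma DP1_edge_leq (a b : bool) : DP1_edge a b -> a <= b.
Proof. by case: a; case: b => // /(_ (conj erefl erefl)). Qed.

Lemma prefix_weight_hom M : @digraph_hom DP1_omega Nle (prefix_weight M).
Proof. by move=> f g fg; apply: leq_sum => i _; apply: DP1_edge_leq. Qed.

Lemma prefix_weight_initial_segment M n :
  prefix_weight M (initial_segment n) = minn M n.
Proof.
elim: M => [|M IHM]; first by rewrite /prefix_weight big_ord0 min0n.
rewrite /prefix_weight big_ord_recr /= -/(prefix_weight _ _) IHM /initial_segment.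
case: (ltnP M n) => [ltMn | leNM] /=.
- by rewrite addn1 !(minn_idPl _) // ltnW.
- by rewrite addn0 !(minn_idPr _) // (leq_trans leNM).
Qed.

Theorem mainTheorem8 :
  forall phi : pi2_sentence, Pi2CSP DP1_omega phi -> Pi2CSP Nle phi.
Proof.
apply: Pi2CSP_sub_local_retract => n xs.
exists initial_segment, (prefix_weight (\max_(i < n) xs i)).
split=> [|i]; first exact: prefix_weight_hom.
by rewrite prefix_weight_initial_segment; apply/minn_idPr/leq_bigmax.
Qed.
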